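(* Let $G$ be a compact abelian group with discrete dual group $\Gamma$, let $N = p_1^{n_1} \cdots p_k^{n_k}$ with distinct primes $p_i$ and $n_i \in \mathbb{N}$, and let $E \subset \Gamma$. Then $E$ is $N$-PR if and only if, for all $1 \le i \le k$, the map $\pi_{p_i^{n_i}}$ is one-to-one on $E$ and $\pi_{p_i^{n_i}}(E)$ is $p_i$-PR as a subset of $\Gamma/\Gamma_{p_i^{n_i}}$.
   Context: For a discrete abelian group $\Delta$ with compact dual $\widehat{\Delta}$ and $M \in \mathbb{N}$, a subset $E \subset \Delta$ is $M$-PR if for every function $\varphi: E \to \mathbb{Z}_M$ (the $M$-th roots of unity in the unit circle) there exists $x \in \widehat{\Delta}$ with $\varphi(\gamma) = \gamma(x)$ for all $\gamma \in E$. Let $\Gamma_0$ be the torsion subgroup of $\Gamma$; for a prime $p$ and $m \in \mathbb{N}$, $\Gamma_{p^m}$ is the subgroup of $\Gamma_0$ of elements whose order is not divisible by $p^m$, and $\pi_{p^m}: \Gamma \to \Gamma/\Gamma_{p^m}$ is the quotient map. *)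

From HB Require Import structures.
From mathcomp Require Import all_boot all_order all_algebra.
From mathcomp Require Import reals complex.
Set Implicit Arguments. Unset Strict Implicit. Unset Printing Implicit Defensive.
Import Order.TTheory GRing.Theory Num.Theory.
Local Open Scope ring_scope.

(* A (discrete) abelian group Gamma is a zmodType; its
   compact dual consists of ALL group homomorphisms Gamma -> T. *)

Definition is_character (R : realType) (Gamma : zmodType) (x : Gamma -> R[i]) : Prop :=
  (forall g : Gamma, `|x g| = 1) /\ (forall a b : Gamma, x (a + b) = x a * x b).

(* E is M-PR: every phi : E -> Z_M (M-th roots of unity) is the restriction
   to E of a character.  Functions on E are represented by functions on Gamma
   (values off E are irrelevant). *)
Definition PR (R : realType) (Gamma : zmodType) (M : nat) (E : Gamma -> Prop) : Prop :=
  forall phi : Gamma -> R[i], (forall g, E g -> phi g ^+ M = 1) ->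
  exists x : Gamma -> R[i], is_character x /\ (forall g, E g -> x g = phi g).

Definition elt_order (Gamma : zmodType) (g : Gamma) (n : nat) : Prop :=
  (0 < n)%N /\ g *+ n = 0 /\ (forall j : nat, (0 < j)%N -> (j < n)%N -> g *+ j <> 0).

Definition Gamma_pm (Gamma : zmodType) (p m : nat) (g : Gamma) : Prop :=
  exists n, elt_order g n /\ ~~ (p ^ m %| n)%N.

Definition is_quotient_map (Gamma Q : zmodType) (H : Gamma -> Prop) (pi : Gamma -> Q) : Prop :=
  (forall a b, pi (a - b) = pi a - pi b) /\
  (forall q : Q, exists g, pi g = q) /\
  (forall g, pi g = 0 <-> H g).

Definition img (Gamma Q : Type) (f : Gamma -> Q) (E : Gamma -> Prop) : Q -> Prop :=
  fun q => exists2 g, E g & f g = q.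

(* A function phi on E with |phi| = 1 extends to a character of Gamma as soon as
   it respects every integer relation among distinct elements of E: the relations
   make phi a well-defined character of the subgroup generated by E, and since the
   circle group is divisible, Zorn's lemma extends it to all of Gamma.  Putting an
   M-th root of unity of order exactly M at a single point shows the converse, so
   E is M-PR iff every relation sum_e c_e e = 0 has M | c_e for all e.
   For N this condition splits over the coprime factors p^n.  For p^n it amounts to
   the condition with p instead of p^n for relations holding modulo Gamma_{p^n}:
   multiplying such a relation by the order of its value, which p^n does not divide,
   gives a true relation; conversely, if p^j divides all coefficients with j < n,
   dividing them by p^j leaves an element killed by p^j, hence in Gamma_{p^n}.
   Relations modulo Gamma_{p^n} are exactly the relations of pi(E) once pi is
   injective on E, and injectivity holds because a - b is such a relation with
   coefficients 1 and -1 whenever pi a = pi b. *)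

From HB Require Import structures.
From mathcomp Require Import all_boot all_order all_algebra cyclic separable cyclotomic.
From mathcomp Require Import reals complex boolp classical_sets.
Set Implicit Arguments. Unset Strict Implicit. Unset Printing Implicit Defensive.
Import Order.TTheory GRing.Theory Num.Theory.
Local Open Scope ring_scope.

Lemma dvdn_prod_coprime (I : eqType) (r : seq I) (F : I -> nat) m :
  uniq r -> {in r &, forall i j, i != j -> coprime (F i) (F j)} ->
  {in r, forall i, F i %| m}%N -> (\prod_(i <- r) F i %| m)%N.
Proof.
elim: r => [|i r IH] /=; first by rewrite big_nil dvd1n.
case/andP=> ir ur Fcop Fdvd.
have cop_ir : coprime (F i) (\prod_(j <- r) F j).
  rewrite big_seq; elim/big_ind: _ => [|x y|j jr]; first exact: coprimen1.
    by rewrite coprimeMr => -> ->.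
  by apply: Fcop; rewrite ?mem_head ?inE ?jr ?orbT //; apply: contraNneq ir => ->.
rewrite big_cons Gauss_dvd // Fdvd ?mem_head //= IH // => [j l jr lr|j jr].
  by apply: Fcop; rewrite inE ?jr ?lr orbT.
by apply: Fdvd; rewrite inE jr orbT.
Qed.

Lemma big_widen_uniq (R : Type) (idx : R) (op : Monoid.com_law idx)
    (I : eqType) (s u : seq I) (F : I -> R) :
  uniq s -> uniq u -> {subset s <= u} ->
  \big[op/idx]_(i <- s) F i = \big[op/idx]_(i <- u) (if i \in s then F i else idx).
Proof.
move=> s_uniq u_uniq su; rewrite -big_mkcond -[RHS]big_filter; apply: perm_big.
apply: uniq_perm; rewrite ?filter_uniq // => i; rewrite mem_filter.
by case si: (i \in s) => //=; rewrite su.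
Qed.

Lemma prim_root_exists (F : closedFieldType) n :
  (0 < n)%N -> n%:R != 0 :> F -> exists z : F, n.-primitive_root z.
Proof.
move=> n_gt0 n_neq0; have [r Xn1E] := closed_field_poly_normal ('X^n - 1 : {poly F}).
rewrite (monicP (monicXnsubC 1 n_gt0)) scale1r in Xn1E.
have r_roots : all n.-unity_root r by apply/allP => z; rewrite -root_prod_XsubC -Xn1E.
have r_uniq : uniq r by rewrite -separable_prod_XsubC -Xn1E separable_Xn_sub_1.
have r_size : (n < (size r).+1)%N by rewrite -(size_prod_XsubC r id) -Xn1E size_XnsubC.
by have /hasP[z _ zP] := has_prim_root n_gt0 r_roots r_uniq r_size; exists z.
Qed.

Lemma norm_exprz_eq1 (F : numFieldType) (v : F) (j : int) : `|v| = 1 -> `|v ^ j| = 1.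
Proof.
move=> v1; case: j => n; first by rewrite normrX v1 expr1n.
by rewrite NegzE -exprnN normfV normrX v1 expr1n invr1.
Qed.

Section IntegerCombinations.
Variable G : zmodType.
Implicit Types (s u : seq G) (c : G -> int).

Definition zcomb s c : G := \sum_(e <- s) e *~ c e.

Definition zpowprod (F : unitRingType) (f : G -> F) s c : F := \prod_(e <- s) f e ^ c e.

Definition zcoef_sub s s' c c' e : int :=
  (if e \in s then c e else 0) - (if e \in s' then c' e else 0).

Lemma zcomb_widen s u c : uniq s -> uniq u -> {subset s <= u} ->
  zcomb s c = zcomb u (fun e => if e \in s then c e else 0).
Proof.
move=> s_uniq u_uniq su; rewrite /zcomb (big_widen_uniq _ _ s_uniq u_uniq su).
by apply: eq_bigr => e _; case: ifP.
Qed.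

Lemma zcombB s c c' : zcomb s (fun e => c e - c' e) = zcomb s c - zcomb s c'.
Proof. by rewrite /zcomb -sumrB; apply: eq_bigr => e _; rewrite mulrzBr. Qed.

Lemma zcomb_sub s s' c c' : uniq s -> uniq s' ->
  zcomb (undup (s ++ s')) (zcoef_sub s s' c c') = zcomb s c - zcomb s' c'.
Proof.
move=> s_uniq s'_uniq; have u_uniq := undup_uniq (s ++ s').
by rewrite zcombB -!zcomb_widen // => e es; rewrite mem_undup mem_cat es ?orbT.
Qed.

Variable F : fieldType.
Implicit Type f : G -> F.

Lemma zpowprod_widen f s u c : uniq s -> uniq u -> {subset s <= u} ->
  zpowprod f s c = zpowprod f u (fun e => if e \in s then c e else 0).
Proof.
move=> s_uniq u_uniq su; rewrite /zpowprod (big_widen_uniq _ _ s_uniq u_uniq su).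
by apply: eq_bigr => e _; case: ifP.
Qed.

Lemma zpowprodB f s c c' : {in s, forall e, f e != 0} ->
  zpowprod f s (fun e => c e - c' e) = zpowprod f s c / zpowprod f s c'.
Proof.
move=> f_neq0; rewrite /zpowprod -prodf_div; apply: eq_big_seq => e es.
by rewrite expfzDr ?f_neq0 // invr_expz.
Qed.

Lemma zpowprod_sub f s s' c c' :
  uniq s -> uniq s' -> {in s ++ s', forall e, f e != 0} ->
  zpowprod f (undup (s ++ s')) (zcoef_sub s s' c c') = zpowprod f s c / zpowprod f s' c'.
Proof.
move=> s_uniq s'_uniq f_neq0; have u_uniq := undup_uniq (s ++ s').
rewrite zpowprodB => [|e]; last by rewrite mem_undup => /f_neq0.
by rewrite -!zpowprod_widen // => e es; rewrite mem_undup mem_cat es ?orbT.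
Qed.

End IntegerCombinations.

Section PartialCharacterGraphs.
Variables (G : zmodType) (F : numClosedFieldType).
Implicit Types (X Y : G -> F -> Prop) (a b g : G) (u v w : F).

(* Partial characters are handled through their graphs, so that the union of a
   chain of them is again one without choosing values. *)
Record pchar_graph X : Prop := PcharGraph {
  pchar_graph0 : X 0 1;
  pchar_graph_fun : forall a v w, X a v -> X a w -> v = w;
  pchar_graph_norm : forall a v, X a v -> `|v| = 1;
  pchar_graphB : forall a b v w, X a v -> X b w -> X (a - b) (v / w) }.

Definition subgraph X Y : Prop := forall a v, X a v -> Y a v.

Section PcharGraphTheory.
Variable X : G -> F -> Prop.
Hypothesis X_pchar : pchar_graph X.

Lemma pchar_graph_neq0 a v : X a v -> v != 0.
Proof. by move/(pchar_graph_norm X_pchar) => v1; rewrite -normr_eq0 v1 oner_eq0. Qed.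

Lemma pchar_graphN a v : X a v -> X (- a) v^-1.
Proof.
by move=> Xav; rewrite -sub0r -div1r; apply: pchar_graphB (pchar_graph0 X_pchar) Xav.
Qed.

Lemma pchar_graphD a b v w : X a v -> X b w -> X (a + b) (v * w).
Proof.
move=> Xav /pchar_graphN Xbw; rewrite -[b]opprK -[w]invrK.
exact: pchar_graphB Xav Xbw.
Qed.

Lemma pchar_graphMz a v (j : int) : X a v -> X (a *~ j) (v ^ j).
Proof.
move=> Xav; have XMn n : X (a *+ n) (v ^+ n).
  elim: n => [|n IH]; first by rewrite mulr0n expr0; exact: pchar_graph0.
  by rewrite mulrS exprS; apply: pchar_graphD.
case: j => n; first exact: XMn.
by rewrite NegzE mulrNz -exprnN; apply/pchar_graphN/XMn.
Qed.

Lemma pchar_graph_zcomb (f : G -> F) s c :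
  {in s, forall e, X e (f e)} -> X (zcomb s c) (zpowprod f s c).
Proof.
elim: s => [|e s IH] Xf; first by rewrite /zcomb /zpowprod !big_nil; exact: pchar_graph0.
rewrite /zcomb /zpowprod !big_cons; apply: pchar_graphD.
  by apply/pchar_graphMz/Xf; rewrite mem_head.
by apply: IH => x xs; apply: Xf; rewrite inE xs orbT.
Qed.

Lemma pchar_graph_period g m v0 (j : int) v :
  (0 < m)%N -> X (g *+ m) v0 ->
  (forall r, (0 < r)%N -> (exists v, X (g *+ r) v) -> (m <= r)%N) ->
  X (g *~ j) v -> exists2 q : int, j = q * m & v = v0 ^ q.
Proof.
move=> m_gt0 Xv0 m_min Xjv.
have Xq := pchar_graphMz (j %/ m)%Z Xv0.
have m_neq0 : m%:Z != 0 by rewrite eqz_nat -lt0n.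
have [r rE] : exists r : nat, (j %% m)%Z = r.
  by exists (absz (j %% m)%Z); rewrite gez0_abs // modz_ge0.
have jE : j = (j %/ m)%Z * m + r by rewrite -rE -divz_eq.
have r0 : r = 0%N.
  apply/eqP; rewrite -leqn0 leqNgt; apply/negP => r_gt0.
  have /(m_min _ r_gt0) : exists v, X (g *+ r) v.
    exists (v / v0 ^ (j %/ m)%Z).
    have -> : g *+ r = g *~ j - (g *+ m) *~ (j %/ m)%Z.
      by rewrite {1}jE mulrzDr [_ * m%:Z]mulrC mulrzA -!pmulrn addrAC subrr add0r.
    exact: pchar_graphB.
  by rewrite leqNgt -ltz_nat -rE ltz_pmod ?ltz_nat.
rewrite r0 addr0 in jE; set q := (j %/ m)%Z in jE Xq *; exists q => //.
by apply: (pchar_graph_fun X_pchar) Xjv _; rewrite jE mulrC mulrzA -pmulrn.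
Qed.

Lemma pchar_graph_cyclic g :
  exists2 w, `|w| = 1 & forall (j : int) v, X (g *~ j) v -> v = w ^ j.
Proof.
pose period m := `[< (0 < m)%N /\ exists v, X (g *+ m) v >].
have [[m0 m0P]|no_period] := pselect (exists m, period m).
  have [m /asboolP[m_gt0 [v0 Xv0]] m_min] := ex_minnP (ex_intro period m0 m0P).
  exists (m.-root v0); first by rewrite norm_rootC (pchar_graph_norm X_pchar Xv0) rootC1.
  move=> j v /(pchar_graph_period m_gt0 Xv0)[r r_gt0 Xr|q -> ->].
    by apply: m_min; apply/asboolP.
  by rewrite mulrC -exprz_exp -exprnP rootCK.
exists 1 => [|j v]; first exact: normr1.
have j0 : X (g *~ j) v -> j = 0.
  case: j => [[|n]|n] // Xv; case: no_period; exists n.+1; apply/asboolP; split=> //.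
    by exists v.
  by exists v^-1; move: Xv; rewrite NegzE mulrNz => /pchar_graphN; rewrite opprK.
move=> Xv; have j_eq0 := j0 Xv; subst j; rewrite exp1rz.
by apply: (pchar_graph_fun X_pchar) Xv _; rewrite mulr0z; exact: pchar_graph0.
Qed.

Definition adjoin g w a v := exists k u, X (a - g *~ k) u /\ v = u * w ^ k.

Lemma subgraph_adjoin g w : subgraph X (adjoin g w).
Proof. by move=> a v Xav; exists 0, v; rewrite mulr0z subr0 expr0z mulr1. Qed.

Lemma adjoin_gen g w : adjoin g w g w.
Proof.
by exists 1, 1; rewrite mulr1z subrr expr1z mul1r; split; first exact: pchar_graph0.
Qed.

Lemma pchar_graph_adjoin g w : `|w| = 1 ->
  (forall (j : int) v, X (g *~ j) v -> v = w ^ j) -> pchar_graph (adjoin g w).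
Proof.
move=> w1 Xg; have w_neq0 : w != 0 by rewrite -normr_eq0 w1 oner_eq0.
split.
- by apply: subgraph_adjoin; exact: pchar_graph0.
- move=> a _ _ [k [u [Xu ->]]] [k' [u' [Xu' ->]]].
  have := pchar_graphB X_pchar Xu Xu'.
  have -> : a - g *~ k - (a - g *~ k') = g *~ (k' - k).
    by rewrite mulrzBr opprB addrC addrA subrK.
  move=> /Xg uE.
  by rewrite -[u](divfK (pchar_graph_neq0 Xu')) uE mulrAC -expfzDr // subrK mulrC.
- move=> a _ [k [u [Xu ->]]].
  by rewrite normrM (pchar_graph_norm X_pchar Xu) norm_exprz_eq1 ?mul1r.
- move=> a b _ _ [k [u [Xu ->]]] [k' [u' [Xu' ->]]].
  exists (k - k'), (u / u'); split.
    have -> : a - b - g *~ (k - k') = a - g *~ k - (b - g *~ k').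
      by rewrite mulrzBr !opprB addrACA [RHS]addrACA [- b + _]addrC.
    exact: pchar_graphB.
  by rewrite expfzDr // -invr_expz mulf_div.
Qed.

End PcharGraphTheory.

Lemma pchar_graph_chain_union (I : Type) (Xs : I -> G -> F -> Prop) (A : set I) X0 :
  pchar_graph X0 -> (forall i, A i -> pchar_graph (Xs i) /\ subgraph X0 (Xs i)) ->
  (forall i j, A i -> A j -> subgraph (Xs i) (Xs j) \/ subgraph (Xs j) (Xs i)) ->
  pchar_graph (fun a v => X0 a v \/ exists2 i, A i & Xs i a v).
Proof.
set U := fun a v => _ => X0_pchar XsP Xs_chain.
have common a v b w : U a v -> U b w ->
    exists2 Y, pchar_graph Y & [/\ subgraph Y U, Y a v & Y b w].
  have inU i : A i -> subgraph (Xs i) U by move=> Ai c x Xix; right; exists i.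
  case=> [X0a|[i Ai Xia]] [X0b|[j Aj Xjb]].
  - by exists X0 => //; split=> // c x; left.
  - exists (Xs j); first exact: (XsP j Aj).1.
    by split=> //; [exact: inU | exact: (XsP j Aj).2].
  - exists (Xs i); first exact: (XsP i Ai).1.
    by split=> //; [exact: inU | exact: (XsP i Ai).2].
  have [sij|sji] := Xs_chain i j Ai Aj.
  - by exists (Xs j); [exact: (XsP j Aj).1 | split=> //; [exact: inU | exact: sij]].
  - by exists (Xs i); [exact: (XsP i Ai).1 | split=> //; [exact: inU | exact: sji]].
split.
- by left; exact: pchar_graph0.
- move=> a v w Uv Uw; have [Y Y_pchar [_ Yv Yw]] := common _ _ _ _ Uv Uw.
  exact: (pchar_graph_fun Y_pchar Yv Yw).
- move=> a v Uv; have [Y Y_pchar [_ Yv _]] := common _ _ _ _ Uv Uv.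
  exact: (pchar_graph_norm Y_pchar Yv).
- move=> a b v w Uv Uw; have [Y Y_pchar [sYU Yv Yw]] := common _ _ _ _ Uv Uw.
  exact/sYU/(pchar_graphB Y_pchar).
Qed.

Lemma pchar_graph_maximal X0 : pchar_graph X0 ->
  exists2 X, pchar_graph X /\ subgraph X0 X &
    forall Y, pchar_graph Y -> subgraph X Y -> subgraph Y X.
Proof.
move=> X0_pchar; pose T := {X | pchar_graph X /\ subgraph X0 X}.
pose R (s t : T) := `[< subgraph (sval s) (sval t) >].
have [[X XP] X_max] : exists t, premaximal R t.
  apply: (@ZL_preorder _ (exist _ X0 (conj X0_pchar (fun a v => id)))).
  - by move=> t; apply/asboolP => a v.
  - by move=> r s t /asboolP rs /asboolP st; apply/asboolP => a v /rs/st.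
  move=> A A_chain.
  have A_chain' s t : A s -> A t ->
      subgraph (sval s) (sval t) \/ subgraph (sval t) (sval s).
    by move=> As At; case: (A_chain s t As At) => /asboolP; [left|right].
  pose U a v := X0 a v \/ exists2 t, A t & sval t a v.
  have U_pchar : pchar_graph U.
    exact: pchar_graph_chain_union X0_pchar (fun t _ => svalP t) A_chain'.
  have sX0U : subgraph X0 U by move=> a v; left.
  exists (exist _ U (conj U_pchar sX0U)) => t At.
  by apply/asboolP => a v Xtv; right; exists t.
exists X => // Y Y_pchar sXY.
have sX0Y : subgraph X0 Y by move=> a v /XP.2 /sXY.
by apply/asboolP; apply: (X_max (exist _ Y (conj Y_pchar sX0Y))); apply/asboolP.
Qed.

Lemma pchar_graph_extend X0 : pchar_graph X0 ->
  exists2 chi : G -> F,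
    (forall a, `|chi a| = 1) /\ (forall a b, chi (a + b) = chi a * chi b)
    & forall a v, X0 a v -> chi a = v.
Proof.
move=> /pchar_graph_maximal[X [X_pchar sX0X] X_max].
have X_total g : exists v, X g v.
  apply: contrapT => X_g; have [w w1 Xg] := pchar_graph_cyclic X_pchar g.
  have /X_max adjX := pchar_graph_adjoin X_pchar w1 Xg.
  by apply: X_g; exists w; apply/adjX/adjoin_gen/X_pchar; exact: subgraph_adjoin.
have [chi chiP] := choice X_total.
exists chi; last by move=> a v /sX0X Xav; apply: (pchar_graph_fun X_pchar (chiP a) Xav).
split=> [a|a b]; first exact: (pchar_graph_norm X_pchar (chiP a)).
exact: (pchar_graph_fun X_pchar (chiP (a + b)) (pchar_graphD X_pchar (chiP a) (chiP b))).
Qed.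

Section Span.
Variables (E : G -> Prop) (phi : G -> F).
Hypotheses (phi_norm : forall e, E e -> `|phi e| = 1)
  (phi_rel : forall s c, uniq s -> {in s, forall e, E e} -> zcomb s c = 0 ->
     zpowprod phi s c = 1).

Definition span_graph a v := exists s c,
  [/\ uniq s, {in s, forall e, E e}, zcomb s c = a & zpowprod phi s c = v].

Lemma span_graphB a b v w : span_graph a v -> span_graph b w -> span_graph (a - b) (v / w).
Proof.
move=> [s [c [s_uniq sE <- <-]]] [s' [c' [s'_uniq s'E <- <-]]].
have phi_neq0 e : E e -> phi e != 0 by move/phi_norm => phi1; rewrite -normr_eq0 phi1 oner_eq0.
exists (undup (s ++ s')), (zcoef_sub s s' c c').
split; [exact: undup_uniq | | exact: zcomb_sub | ].
  by move=> e; rewrite mem_undup mem_cat => /orP[/sE|/s'E].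
by apply: zpowprod_sub => // e; rewrite mem_cat => /orP[/sE|/s'E] /phi_neq0.
Qed.

Lemma span_graph_gen e : E e -> span_graph e (phi e).
Proof.
move=> Ee; exists [:: e], (fun _ => 1); split=> //; first by move=> x; rewrite inE => /eqP ->.
  by rewrite /zcomb big_seq1.
by rewrite /zpowprod big_seq1.
Qed.

Lemma pchar_graph_span : pchar_graph span_graph.
Proof.
have span0 : span_graph 0 1 by exists [::], (fun _ => 0); rewrite /zcomb /zpowprod !big_nil.
split=> // [a v w Xv Xw|a v [s [c [_ sE _ <-]]]|]; last exact: span_graphB.
  have [s [c [s_uniq sE rel vw]]] := span_graphB Xv Xw.
  by rewrite subrr in rel; apply: divr1_eq; rewrite -vw phi_rel.
rewrite /zpowprod normr_prod big_seq big1 // => e /sE /phi_norm.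
exact: norm_exprz_eq1.
Qed.

End Span.

Theorem character_extension E (phi : G -> F) :
  (forall e, E e -> `|phi e| = 1) ->
  (forall s c, uniq s -> {in s, forall e, E e} -> zcomb s c = 0 -> zpowprod phi s c = 1) ->
  exists2 chi : G -> F, (forall a, `|chi a| = 1) /\ (forall a b, chi (a + b) = chi a * chi b)
    & forall e, E e -> chi e = phi e.
Proof.
move=> phi_norm phi_rel.
have [chi chi_char chi_ext] := pchar_graph_extend (pchar_graph_span phi_norm phi_rel).
by exists chi => // e /(span_graph_gen phi) /chi_ext.
Qed.

End PartialCharacterGraphs.

Definition relations_dvd_mod (G : zmodType) (H : G -> Prop) (M : nat) (E : G -> Prop) :=
  forall s c, uniq s -> {in s, forall e, E e} -> H (zcomb s c) ->
  {in s, forall e, (M %| `|c e|)%N}.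

Definition relations_dvd (G : zmodType) (M : nat) (E : G -> Prop) :=
  relations_dvd_mod (fun g => g = 0) M E.

Section PRRelations.
Variables (R : realType) (G : zmodType).

Lemma character_pchar_graph (x : G -> R[i]) :
  is_character x -> pchar_graph (fun a v => x a = v).
Proof.
case=> x_norm xD; have x_neq0 a : x a != 0 by rewrite -normr_eq0 x_norm oner_eq0.
have x0 : x 0 = 1 by apply: (mulfI (x_neq0 0)); rewrite -xD !addr0 mulr1.
split=> // [a _ _ <- <- //|a _ <- //|a b _ _ <- <-].
by rewrite -[in x a](subrK b a) (xD (a - b) b) mulfK.
Qed.

Lemma PR_relations_dvd M (E : G -> Prop) : (0 < M)%N -> PR R M E <-> relations_dvd M E.
Proof.
move=> M_gt0; split=> [E_PR s c s_uniq sE rel e0 e0s|E_rel phi phiM].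
  have M_neq0 : M%:R != 0 :> R[i] by rewrite pnatr_eq0 -lt0n.
  have [z z_prim] := prim_root_exists M_gt0 M_neq0.
  pose phi g := if g == e0 then z else 1.
  have [|x [x_char x_ext]] := E_PR phi.
    by move=> g _; rewrite /phi; case: eqP => _; [exact: prim_expr_order | exact: expr1n].
  have x_graph := character_pchar_graph x_char.
  have x0 : x 0 = 1 := pchar_graph0 x_graph.
  have := pchar_graph_zcomb x_graph (f := x) (s := s) c (fun e _ => erefl).
  rewrite rel x0 /zpowprod.
  rewrite (eq_big_seq (fun e => phi e ^ c e)) => [|e es]; last by rewrite x_ext //; apply: sE.
  rewrite (bigD1_seq e0) //= big1_seq ?mulr1 => [|e /andP[e_neq0 _]]; last first.
    by rewrite /phi (negbTE e_neq0) exp1rz.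
  rewrite /phi eqxx; case: (c e0) => n /=.
    by rewrite -exprnP (prim_order_dvd z_prim) eq_sym => /eqP.
  by rewrite NegzE -exprnN => /esym/eqP; rewrite invr_eq1 -(prim_order_dvd z_prim).
have phi_norm e : E e -> `|phi e| = 1.
  by move=> Ee; apply/eqP; rewrite -(pexpr_eq1 M_gt0) ?normr_ge0 // -normrX phiM ?normr1.
have phi_rel s c : uniq s -> {in s, forall e, E e} -> zcomb s c = 0 -> zpowprod phi s c = 1.
  move=> s_uniq sE rel; rewrite /zpowprod big_seq big1 // => e es.
  have /divzK <- : (M%:Z %| c e)%Z by rewrite dvdzE; exact: E_rel s c s_uniq sE rel e es.
  by rewrite mulrC -exprz_exp -exprnP phiM ?exp1rz //; apply: sE.
have [chi [chi_norm chiD] chi_ext] := character_extension phi_norm phi_rel.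
by exists chi.
Qed.

End PRRelations.

Lemma elt_order_exists (G : zmodType) (y : G) m : (0 < m)%N -> y *+ m = 0 ->
  exists2 o, elt_order y o & (o %| m)%N.
Proof.
move=> m_gt0 ym; pose P o := (0 < o)%N && (y *+ o == 0).
have P_ex : exists o, P o by exists m; rewrite /P m_gt0 ym eqxx.
have [o /andP[o_gt0 /eqP yo] o_min] := ex_minnP P_ex.
exists o.
  do 2!split=> //; move=> j j_gt0 j_lt_o yj.
  by have := o_min j; rewrite /P j_gt0 yj eqxx leqNgt j_lt_o => /(_ isT).
have r0 : (m %% o = 0)%N.
  apply/eqP; move: (ltn_pmod m o_gt0); apply: contraTT => r_neq0.
  rewrite -leqNgt; apply: o_min; rewrite /P lt0n r_neq0 /=.
  by move: ym; rewrite {1}(divn_eq m o) mulrnDr mulnC mulrnA yo mul0rn add0r => ->.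
by apply/dvdnP; exists (m %/ o)%N; rewrite {1}(divn_eq m o) r0 addn0.
Qed.

Lemma Gamma_pm_of_mulrn (G : zmodType) p n j (y : G) :
  (1 < p)%N -> (j < n)%N -> y *+ p ^ j = 0 -> Gamma_pm p n y.
Proof.
move=> p_gt1 j_lt_n yp; have pj_gt0 : (0 < p ^ j)%N by rewrite expn_gt0 ltnW.
have [o o_order o_dvd] := elt_order_exists pj_gt0 yp.
exists o; split=> //; apply/negP => /dvdn_trans/(_ o_dvd)/dvdn_leq.
by rewrite pj_gt0 leq_exp2l // leqNgt j_lt_n => /(_ isT).
Qed.

Section Relations.
Variable G : zmodType.
Implicit Types (E : G -> Prop) (s : seq G) (c : G -> int).

Lemma relations_dvd_prod (I : finType) (F : I -> nat) E :
  (forall i j, i != j -> coprime (F i) (F j)) ->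
  relations_dvd (\prod_i F i) E <-> forall i, relations_dvd (F i) E.
Proof.
move=> F_coprime; split=> [E_rel i s c s_uniq sE rel e es|E_rel s c s_uniq sE rel e es].
  by apply: dvdn_trans (E_rel s c s_uniq sE rel e es); rewrite (bigD1 i) ?dvdn_mulr.
apply: dvdn_prod_coprime (index_enum_uniq I) _ _ => [i j _ _|i _].
  exact: F_coprime.
exact: E_rel s c s_uniq sE rel e es.
Qed.

Variables (p n : nat).
Hypothesis p_prime : prime p.

Lemma relations_dvd_pexp_mod E :
  relations_dvd (p ^ n) E -> relations_dvd_mod (Gamma_pm p n) p E.
Proof.
move=> E_rel s c s_uniq sE [m [[m_gt0 [ym _]] pn_ndvd_m]] e es.
have rel : zcomb s (fun e => c e * m%:Z) = 0.
  by rewrite /zcomb; under eq_bigr do rewrite mulrzA; rewrite -mulrz_suml -pmulrn ym.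
have := E_rel s _ s_uniq sE rel e es; rewrite abszM /=.
apply: contraLR => p_ndvd.
have pn_coprime : coprime (p ^ n) `|c e| by apply: coprimeXl; rewrite prime_coprime.
by rewrite Gauss_dvdr.
Qed.

Lemma relations_dvd_mod_pexp E :
  relations_dvd_mod (Gamma_pm p n) p E -> relations_dvd (p ^ n) E.
Proof.
move=> E_rel s c s_uniq sE rel.
suff pj_dvd j : (j <= n)%N -> {in s, forall e, (p ^ j %| `|c e|)%N} by apply: pj_dvd.
elim: j => [_ e _|j IH j_lt_n e es]; first by rewrite expn0 dvd1n.
have pj_dvd_c := IH (ltnW j_lt_n).
have cE : {in s, forall e, c e = (c e %/ (p ^ j)%:Z)%Z * (p ^ j)%:Z}.
  by move=> x xs; rewrite divzK // dvdzE pj_dvd_c.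
pose d e := (c e %/ (p ^ j)%:Z)%Z.
have yp : zcomb s d *+ p ^ j = 0.
  rewrite -rel /zcomb pmulrn mulrz_suml; apply: eq_big_seq => x xs.
  by rewrite [c x]cE // mulrzA.
have := E_rel s d s_uniq sE (Gamma_pm_of_mulrn (prime_gt1 p_prime) j_lt_n yp) e es.
have pj_gt0 : (0 < p ^ j)%N by rewrite expn_gt0 prime_gt0.
by rewrite cE // abszM /= expnSr [(p ^ j * p)%N]mulnC dvdn_pmul2r.
Qed.

End Relations.

Section Quotient.
Variables (G Q : zmodType) (H : G -> Prop) (pi : G -> Q) (M : nat) (E : G -> Prop).
Hypothesis pi_quot : is_quotient_map H pi.

HB.instance Definition _ := GRing.isZmodMorphism.Build G Q pi pi_quot.1.

Lemma quotient_zcomb s c : pi (zcomb s c) = \sum_(e <- s) pi e *~ c e.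
Proof. by rewrite raddf_sum; apply: eq_bigr => e _; rewrite raddfMz. Qed.

Lemma img_section : exists sec : Q -> G, forall q, img pi E q -> E (sec q) /\ pi (sec q) = q.
Proof.
have sec_ex q : exists g, img pi E q -> E g /\ pi g = q.
  by case: (pselect (img pi E q)) => [[g Eg <-]|no_q]; [exists g | exists 0 => /no_q].
by have [sec secP] := choice sec_ex; exists sec.
Qed.

Lemma relations_dvd_mod_inj : M != 1%N -> relations_dvd_mod H M E ->
  forall a b, E a -> E b -> pi a = pi b -> a = b.
Proof.
move=> M_neq1 E_rel a b Ea Eb pi_ab; apply: contrapT => /eqP a_neq_b.
move/negP: M_neq1; apply.
pose c g : int := if g == a then 1 else -1.
have ab_uniq : uniq [:: a; b] by rewrite /= inE a_neq_b.
have abE : {in [:: a; b], forall e, E e} by move=> e; rewrite !inE => /orP[] /eqP ->.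
have Hab : H (zcomb [:: a; b] c).
  apply/pi_quot.2.2; rewrite quotient_zcomb big_cons big_seq1 /c eqxx eq_sym (negbTE a_neq_b).
  by rewrite mulr1z mulrN1z pi_ab subrr.
by have := E_rel _ _ ab_uniq abE Hab a (mem_head _ _); rewrite /c eqxx dvdn1.
Qed.

Lemma relations_dvd_mod_img : relations_dvd_mod H M E -> relations_dvd M (img pi E).
Proof.
move=> E_rel t d t_uniq tE rel q qt; have [sec secP] := img_section.
have piK : {in t, cancel sec pi} by move=> x /tE /secP[].
have s_uniq : uniq (map sec t) by rewrite (map_inj_in_uniq (can_in_inj piK)).
have sE : {in map sec t, forall e, E e} by move=> _ /mapP[x /tE /secP[Ex _] ->].
have Hs : H (zcomb (map sec t) (fun e => d (pi e))).
  apply/pi_quot.2.2; rewrite quotient_zcomb big_map -[in RHS]rel /zcomb.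
  by apply: eq_big_seq => x xt; rewrite piK.
by have := E_rel _ _ s_uniq sE Hs (sec q) (map_f sec qt); rewrite piK.
Qed.

Lemma img_relations_dvd_mod : (forall a b, E a -> E b -> pi a = pi b -> a = b) ->
  relations_dvd M (img pi E) -> relations_dvd_mod H M E.
Proof.
move=> pi_inj img_rel s c s_uniq sE Hs e es; have [sec secP] := img_section.
have secK : {in s, cancel pi sec}.
  move=> x xs; have Ex := sE x xs.
  by have [Esec /pi_inj] := secP (pi x) (ex_intro2 _ _ x Ex erefl); apply.
have t_uniq : uniq (map pi s) by rewrite (map_inj_in_uniq (can_in_inj secK)).
have tE : {in map pi s, forall q, img pi E q}.
  by move=> _ /mapP[x xs ->]; exists x => //; apply: sE.
have rel : zcomb (map pi s) (fun q => c (sec q)) = 0.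
  rewrite /zcomb big_map -[RHS](proj2 (pi_quot.2.2 _) Hs) quotient_zcomb.
  by apply: eq_big_seq => x xs; rewrite secK.
by have := img_rel _ _ t_uniq tE rel (pi e) (map_f pi es); rewrite secK.
Qed.

End Quotient.

Lemma relations_dvd_prime_power (G Q : zmodType) (pi : G -> Q) p n (E : G -> Prop) :
  prime p -> is_quotient_map (Gamma_pm p n) pi ->
  relations_dvd (p ^ n) E <->
  (forall a b, E a -> E b -> pi a = pi b -> a = b) /\ relations_dvd p (img pi E).
Proof.
move=> p_prime pi_quot; have p_neq1 : p != 1%N by apply: contraTneq (prime_gt1 p_prime) => ->.
split=> [/(relations_dvd_pexp_mod p_prime) E_rel|[pi_inj img_rel]].
  split; first exact: relations_dvd_mod_inj pi_quot p_neq1 E_rel.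
  exact: relations_dvd_mod_img pi_quot E_rel.
exact/(relations_dvd_mod_pexp p_prime)/(img_relations_dvd_mod pi_quot pi_inj img_rel).
Qed.

Theorem corollary3p4 (R : realType) (Gamma : zmodType) (k : nat)
    (p n : 'I_k -> nat) (Q : 'I_k -> zmodType) (pi : forall i, Gamma -> Q i)
    (N : nat) (E : Gamma -> Prop) :
  (forall i, prime (p i)) -> injective p -> (forall i, (0 < n i)%N) ->
  N = (\prod_(i < k) p i ^ n i)%N ->
  (forall i, is_quotient_map (Gamma_pm (p i) (n i)) (pi i)) ->
  (PR R N E <->
   (forall i, (forall a b, E a -> E b -> pi i a = pi i b -> a = b) /\
              PR R (p i) (img (pi i) E))).
Proof.
move=> p_prime p_inj _ -> pi_quot. (* the exponents need not be positive *)
have N_gt0 : (0 < \prod_(i < k) p i ^ n i)%N.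
  by rewrite prodn_gt0 // => i; rewrite expn_gt0 prime_gt0.
have pn_coprime i j : i != j -> coprime (p i ^ n i) (p j ^ n j).
  move=> ij; apply/coprimeXl/coprimeXr; rewrite prime_coprime // dvdn_prime2 //.
  by apply: contra ij => /eqP/p_inj ->.
rewrite PR_relations_dvd // relations_dvd_prod //.
have pp_rel i := relations_dvd_prime_power E (p_prime i) (pi_quot i).
have p_gt0 i := prime_gt0 (p_prime i).
split=> E_rel i.
  have [pi_inj img_rel] := (pp_rel i).1 (E_rel i).
  by split; last exact/(PR_relations_dvd R _ (p_gt0 i)).
have [pi_inj /(PR_relations_dvd R _ (p_gt0 i)) img_rel] := E_rel i.
exact/(pp_rel i).
Qed.
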